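(* Fix a master $m$, a finite nonempty set $\Omega_m$ of workers, and for each $n\in\Omega_m$ parameters $u_{m,n}>0$, $a_{m,n}>0$, and let $L_m>0$. Then the optimization problem $$\min_{\{l_{m,n}\}_{n\in\Omega_m},\,t_m} \; t_m \quad\text{s.t.}\quad L_m-\sum_{n\in\Omega_m} l_{m,n}\left(1-e^{-\frac{u_{m,n}}{l_{m,n}}\left(t_m-a_{m,n}l_{m,n}\right)}\right)\le 0,\qquad l_{m,n}\ge 0\ \ \forall n\in\Omega_m,$$ is a convex optimization problem. (Here the constraint function is considered on the domain $l_{m,n}>0$.)
   Context: This is the load-allocation problem for a single master $m$ in a coded distributed computing system: master $m$ must obtain $L_m$ MDS-coded row-vector products, worker $n\in\Omega_m$ is allocated $l_{m,n}$ coded rows, and the processing time of worker $n$ on $l$ rows is a shifted exponential random variable $T$ with $\mathbb{P}[T\le t]=1-e^{-\frac{u_{m,n}}{l}(t-a_{m,n}l)}$ for $t\ge a_{m,n}l$ (and $0$ otherwise). The sum in the constraint is the expected number of results received by time $t_m$ (in the regime $t_m\ge a_{m,n}l_{m,n}$), and $t_m$ is the approximate completion time. *)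

From HB Require Import structures.
From mathcomp Require Import all_boot all_order all_algebra.
From mathcomp Require Import all_classical all_reals all_analysis.
Set Implicit Arguments. Unset Strict Implicit. Unset Printing Implicit Defensive.
Import Order.TTheory GRing.Theory Num.Theory.
Local Open Scope ring_scope.

(* A decision point: loads l = (l_n)_{n : 'I_k} together with the time t. *)
Definition point (R : realType) (k : nat) : Type := (('I_k -> R) * R)%type.

Definition comb (R : realType) (k : nat) (th : R) (x y : point R k) : point R k :=
  (fun i => th * x.1 i + (1 - th) * y.1 i, th * x.2 + (1 - th) * y.2).

Definition convex_set_pt (R : realType) (k : nat) (D : point R k -> Prop) : Prop :=
  forall x y th, D x -> D y -> 0 <= th <= 1 -> D (comb th x y).

Definition convex_fun_on (R : realType) (k : nat) (D : point R k -> Prop)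
    (f : point R k -> R) : Prop :=
  forall x y th, D x -> D y -> 0 <= th <= 1 ->
    f (comb th x y) <= th * f x + (1 - th) * f y.

(* A problem  min f  s.t.  g_j <= 0 (j : I), on domain D, is a convex
   optimization problem: D convex, objective and all inequality-constraint
   functions convex on D (no equality constraints here). *)
Definition convex_program (R : realType) (k : nat) (D : point R k -> Prop)
    (f : point R k -> R) (I : Type) (g : I -> point R k -> R) : Prop :=
  [/\ convex_set_pt D, convex_fun_on D f & forall j, convex_fun_on D (g j)].

Definition load_domain (R : realType) (k : nat) (x : point R k) : Prop :=
  forall i, 0 < x.1 i.

Definition objective (R : realType) (k : nat) (x : point R k) : R := x.2.

Definition load_constraint (R : realType) (k : nat) (L : R) (u a : 'I_k -> R)
    (x : point R k) : R :=
  L - \sum_(i < k) x.1 i * (1 - expR (- (u i / x.1 i) * (x.2 - a i * x.1 i))).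

(* All constraints, in the form g <= 0: the load constraint (None) and
   -l_n <= 0 for each worker n (Some n). *)
Definition constraints (R : realType) (k : nat) (L : R) (u a : 'I_k -> R)
    (j : option 'I_k) (x : point R k) : R :=
  match j with
  | None => load_constraint L u a x
  | Some n => - x.1 n
  end.

(* Each summand l (1 - exp(-(u/l)(t - a l))) equals l minus the perspective
   (l, s) |-> l exp(s / l) of the exponential, evaluated at the affine function
   s = u a l - u t.  The perspective of a convex function is convex: with
   l = th l1 + (1 - th) l2 and w = (th s1 + (1 - th) s2) / l, weighting the
   tangent-line bounds exp(s_i / l_i) >= exp w (1 + s_i / l_i - w) by th l1 and
   (1 - th) l2 and adding them gives exactly l exp w.  The load constraint is
   thus a constant plus a sum of convex functions, the other constraints and
   the objective are linear, and positive loads form a convex set. *)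
From Pilot Require Import Defs.
From HB Require Import structures.
From mathcomp Require Import all_boot all_order all_algebra.
From mathcomp Require Import all_classical all_reals all_analysis.
From mathcomp Require Import ring lra.
Import Order.TTheory GRing.Theory Num.Theory.
Local Open Scope ring_scope.

Lemma expR_tangent (R : realType) (z w : R) : expR w * (1 + z - w) <= expR z.
Proof.
have -> : expR z = expR w * expR (z - w) by rewrite -expRD; congr expR; ring.
by rewrite -addrA ler_wpM2l ?expR_ge0 ?expR_ge1Dx.
Qed.

Lemma conv_gt0 (R : realFieldType) (th x y : R) :
  0 <= th <= 1 -> 0 < x -> 0 < y -> 0 < th * x + (1 - th) * y.
Proof.
move=> /andP[th0 th1] x0 y0; have [->|th_gt0] := eqVneq th 0.
  by rewrite subr0 mul0r mul1r add0r.
have : 0 < th * x by rewrite mulr_gt0 // lt_neqAle eq_sym th_gt0.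
have : 0 <= (1 - th) * y by rewrite mulr_ge0 ?subr_ge0 // ltW.
lra.
Qed.

Lemma perspective_expR_convex (R : realType) (th l1 l2 s1 s2 : R) :
  0 <= th <= 1 -> 0 < l1 -> 0 < l2 ->
  (th * l1 + (1 - th) * l2) * expR ((th * s1 + (1 - th) * s2) / (th * l1 + (1 - th) * l2))
    <= th * (l1 * expR (s1 / l1)) + (1 - th) * (l2 * expR (s2 / l2)).
Proof.
move=> th01 l1_gt0 l2_gt0; set l := th * l1 + _; set w := (_ + _) / l.
have l_gt0 : 0 < l by exact: conv_gt0.
have [th0 th1] := andP th01.
have c1 : 0 <= th * l1 by rewrite mulr_ge0 // ltW.
have c2 : 0 <= (1 - th) * l2 by rewrite mulr_ge0 ?subr_ge0 // ltW.
have <- : th * l1 * (expR w * (1 + s1 / l1 - w))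
          + (1 - th) * l2 * (expR w * (1 + s2 / l2 - w)) = l * expR w.
  by rewrite /w /l; field; rewrite !lt0r_neq0.
by apply: lerD; rewrite [in X in _ <= X]mulrA ler_wpM2l // expR_tangent.
Qed.

(* Qualified: unqualified [point] is MathComp-Analysis's element of a pointed type. *)
Section ConvexFunctions.
Variables (R : realType) (k : nat) (D : Defs.point R k -> Prop).

Lemma convex_fun_on_linear (f : Defs.point R k -> R) :
  (forall x y th, f (comb th x y) = th * f x + (1 - th) * f y) ->
  convex_fun_on D f.
Proof. by move=> flin x y th _ _ _; rewrite flin. Qed.

Lemma convex_fun_on_ext (f g : Defs.point R k -> R) :
  f =1 g -> convex_fun_on D g -> convex_fun_on D f.
Proof. by move=> fg gcvx x y th Dx Dy th01; rewrite !fg; exact: gcvx. Qed.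

Lemma convex_fun_onD (f g : Defs.point R k -> R) :
  convex_fun_on D f -> convex_fun_on D g -> convex_fun_on D (fun x => f x + g x).
Proof.
move=> fcvx gcvx x y th Dx Dy th01.
have -> : th * (f x + g x) + (1 - th) * (f y + g y)
          = (th * f x + (1 - th) * f y) + (th * g x + (1 - th) * g y) by ring.
by apply: lerD; [exact: fcvx | exact: gcvx].
Qed.

Lemma convex_fun_on_sum (n : nat) (F : 'I_n -> Defs.point R k -> R) :
  (forall i, convex_fun_on D (F i)) ->
  convex_fun_on D (fun x => \sum_(i < n) F i x).
Proof.
move=> Fcvx x y th Dx Dy th01.
rewrite !mulr_sumr -big_split /=; apply: ler_sum => i _; exact: Fcvx.
Qed.

End ConvexFunctions.

Lemma load_domain_convex (R : realType) (k : nat) :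
  convex_set_pt (@load_domain R k).
Proof. by move=> x y th Dx Dy th01 i; apply: conv_gt0. Qed.

Lemma load_term_convex (R : realType) (k : nat) (u a : R) (i : 'I_k) :
  convex_fun_on (@load_domain R k)
    (fun x => x.1 i * expR (- (u / x.1 i) * (x.2 - a * x.1 i))).
Proof.
have persp l t : 0 < l ->
    l * expR (- (u / l) * (t - a * l)) = l * expR ((u * a * l - u * t) / l).
  by move=> l_gt0; congr (_ * expR _); field; rewrite lt0r_neq0.
move=> x y th Dx Dy th01 /=.
rewrite persp; last exact: conv_gt0.
rewrite (persp (x.1 i)); last exact: Dx.
rewrite (persp (y.1 i)); last exact: Dy.
have -> : u * a * (th * x.1 i + (1 - th) * y.1 i) - u * (th * x.2 + (1 - th) * y.2)
          = th * (u * a * x.1 i - u * x.2) + (1 - th) * (u * a * y.1 i - u * y.2)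
  by ring.
exact: perspective_expR_convex th01 (Dx i) (Dy i).
Qed.

Lemma load_constraint_convex (R : realType) (k : nat) (L : R) (u a : 'I_k -> R) :
  convex_fun_on (@load_domain R k) (load_constraint L u a).
Proof.
apply: (@convex_fun_on_ext R k _ _ (fun x => L + \sum_(i < k)
   (- x.1 i + x.1 i * expR (- (u i / x.1 i) * (x.2 - a i * x.1 i))))).
  move=> x; rewrite /load_constraint -sumrN; congr (_ + _).
  by apply: eq_bigr => i _; ring.
apply: convex_fun_onD; first by apply: convex_fun_on_linear => x y th; ring.
apply: convex_fun_on_sum => i; apply: convex_fun_onD; last exact: load_term_convex.
by apply: convex_fun_on_linear => x y th /=; ring.
Qed.

Theorem lemma1 (R : realType) (k : nat) (L : R) (u a : 'I_k -> R) :
  (0 < k)%N -> (forall n, 0 < u n) -> (forall n, 0 < a n) -> 0 < L ->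
  convex_program (@load_domain R k) (@objective R k) (constraints L u a).
Proof.
move=> _ _ _ _; split.
- exact: load_domain_convex.
- by apply: convex_fun_on_linear.
- case=> [n|]; last exact: load_constraint_convex.
  by apply: convex_fun_on_linear => x y th /=; ring.
Qed.
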